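(* Let $\mu\in GF(q)\setminus\{0\}$ with $b:=\mu^2\neq1$. Then the $2(q+1)$ common tangent circles of $\mathcal B_1$ and $\mathcal B_b$ are exactly the circles in $$\{\mathcal B^1_{(sP,c)}:P\in\mathcal B_1\}\ \cup\ \{\mathcal B^1_{(s'P,c')}:P\in\mathcal B_1\},$$ where $s=\frac{1+\mu}2$, $c=\left(\frac{1-\mu}2\right)^2$, $s'=\frac{1-\mu}2$, $c'=\left(\frac{1+\mu}2\right)^2$. Moreover, for every $P\in\mathcal B_1$ we have $P,\mu P\in\mathcal B^1_{(sP,c)}$ and $P,-\mu P\in\mathcal B^1_{(s'P,c')}$.
   Context: Let $p$ be an odd prime, $m\ge1$, and $q=p^m$. $GF(q^2)$ denotes the quadratic extension of $GF(q)$, and for $z\in GF(q^2)$ we write $\bar z:=z^{q}$. The Miquelian Möbius plane $\mathbb M(q)$ has point set $GF(q^2)\cup\{\infty\}$ and circles of two types: for $s\in GF(q^2)$ and $c\in GF(q)\setminus\{0\}$, the circle of the first type $\mathcal B^1_{(s,c)}=\{z\in GF(q^2):(z-s)(\bar z-\bar s)=c\}$; for $s\in GF(q^2)\setminus\{0\}$ and $c\in GF(q)$, the circle of the second type $\mathcal B^2_{(s,c)}=\{z\in GF(q^2):\bar s z+s\bar z=c\}\cup\{\infty\}$. Two circles are called tangential if they have exactly one point in common. For $a\in GF(q)\setminus\{0\}$ put $\mathcal B_a:=\mathcal B^1_{(0,a)}$; so $\mathcal B_1=\{z: z\bar z=1\}$. *)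

(* The Miquelian Moebius plane M(q) over a finite field F
   of order q^2 (q = p^m, p odd prime).  Points are [option F], None = infinity. *)
From HB Require Import structures.
From mathcomp Require Import all_boot all_order all_algebra all_field.
Set Implicit Arguments. Unset Strict Implicit. Unset Printing Implicit Defensive.
Import GRing.Theory.
Local Open Scope ring_scope.

Section Moebius.
Variables (F : finFieldType) (q : nat).

Definition conj (z : F) : F := z ^+ q.

Definition inGFq (z : F) : bool := z ^+ q == z.

Definition circle1 (s c : F) : {set option F} :=
  [set x : option F | if x is Some z then (z - s) * (conj z - conj s) == c else false].

Definition circle2 (s c : F) : {set option F} :=
  [set x : option F | if x is Some z then conj s * z + s * conj z == c else true].

Definition is_circle (C : {set option F}) : bool :=
  [exists s : F, exists c : F,
     ([&& inGFq c, c != 0 & C == circle1 s c]) ||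
     ([&& s != 0, inGFq c & C == circle2 s c])].

Definition tangential (C D : {set option F}) : bool := #|C :&: D| == 1%N.

Definition Bcirc (a : F) : {set option F} := circle1 0 a.

Definition common_tangents (C D : {set option F}) : {set {set option F}} :=
  [set E : {set option F} | [&& is_circle E, tangential E C & tangential E D]].

End Moebius.

From HB Require Import structures.
From mathcomp Require Import all_boot all_order all_algebra all_field.
From mathcomp Require Import all_solvable.
From mathcomp Require Import ring.
Set Implicit Arguments.
Unset Strict Implicit.
Import GRing.Theory.
Local Open Scope ring_scope.

(* A
   first-type circle with centre s meets B_a where z conj z = a and
   conj s z + s conj z = a + s conj s - c, and such a line touches B_a exactly
   when its discriminant (a + s conj s - c)^2 - 4 s conj s a vanishes.
   Tangency to both B_1 and B_b gives two discriminant equations in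
   t = s conj s and c, whose only solutions are t = ((1 +- mu)/2)^2 and
   c = ((1 -+ mu)/2)^2; every s with s conj s = r^2 is r P with P on B_1.
   Second-type circles are lines and would force b = 1.  The circle with centre
   r P touches B_1 at P, which makes the parametrisation injective, and the two
   families touch B_b at mu P and -mu P, so they are disjoint; B_1 consists of
   the q+1 roots of z^(q+1) = 1. *)

Lemma card_finField_unity_roots (K : finFieldType) n :
  (n %| #|K|.-1)%N -> #|[set x : K | x ^+ n == 1]| = n.
Proof.
move=> n_dvd; have K_gt1 := finNzRing_gt1 K.
have [z _ prim_z] : exists2 z, z \in enum [set~ (0 : K)] & #|K|.-1.-primitive_root z.
  apply/hasP; apply: has_prim_root; first by rewrite -subn1 subn_gt0.
  - apply/allP => x; rewrite mem_enum !inE unity_rootE => x_neq0.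
    apply/eqP; apply: (mulfI x_neq0).
    by rewrite -exprS prednK ?(ltnW K_gt1) // expf_card mulr1.
  - exact: enum_uniq.
  - by rewrite -cardE cardsC1.
have prim_w := dvdn_prim_root prim_z n_dvd; set w := z ^+ _ in prim_w.
have -> : [set x : K | x ^+ n == 1] = [set w ^+ (val i) | i : 'I_n].
  apply/setP => x; rewrite inE; apply/eqP/imsetP => [/(prim_rootP prim_w)[i ->] | [i _ ->]].
    by exists i.
  by rewrite exprAC (prim_expr_order prim_w) expr1n.
rewrite card_imset ?card_ord // => i j /eqP.
by rewrite (eq_prim_root_expr prim_w) !modn_small ?ltn_ord // => /eqP/val_inj.
Qed.

Lemma tangent_params (K : fieldType) (mu t c : K) :
    2%:R != 0 :> K -> mu ^+ 2 != 1 ->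
    (1 + t - c) ^+ 2 = 4%:R * t -> (mu ^+ 2 + t - c) ^+ 2 = 4%:R * t * mu ^+ 2 ->
  t = ((1 + mu) / 2%:R) ^+ 2 /\ c = ((1 - mu) / 2%:R) ^+ 2 \/
  t = ((1 - mu) / 2%:R) ^+ 2 /\ c = ((1 + mu) / 2%:R) ^+ 2.
Proof.
move=> two_neq0 mu2_neq1 disc1 discb.
have four_neq0 : 4%:R != 0 :> K by rewrite (natrM K 2 2) mulf_neq0.
have c_def : c = (mu ^+ 2 + 1) / 2%:R - t.
  have : (mu ^+ 2 - 1) * (mu ^+ 2 + 1 - 2%:R * c - 2%:R * t) = 0.
    transitivity ((mu ^+ 2 + t - c) ^+ 2 - 4%:R * t * mu ^+ 2
                  - ((1 + t - c) ^+ 2 - 4%:R * t)); first by ring.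
    by rewrite discb disc1 !subrr.
  move/eqP; rewrite mulf_eq0 subr_eq0 (negbTE mu2_neq1) /= => /eqP lin.
  rewrite (_ : c = (mu ^+ 2 + 1) / 2%:R - t - (mu ^+ 2 + 1 - 2%:R * c - 2%:R * t) / 2%:R).
    by rewrite lin mul0r subr0.
  by field.
have : (4%:R * t - (1 + mu) ^+ 2) * (4%:R * t - (1 - mu) ^+ 2) = 4%:R * ((1 + t - c) ^+ 2 - 4%:R * t).
  by rewrite c_def; field; rewrite ?two_neq0 ?four_neq0.
rewrite disc1 subrr mulr0 => /eqP; rewrite mulf_eq0 => /orP[] /eqP t_root; [left|right].
- have t_def : t = ((1 + mu) / 2%:R) ^+ 2.
    rewrite (_ : t = (4%:R * t - (1 + mu) ^+ 2) / 4%:R + ((1 + mu) / 2%:R) ^+ 2).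
      by rewrite t_root mul0r add0r.
    by field; rewrite two_neq0 four_neq0.
  by split=> //; rewrite c_def t_def; field; rewrite ?two_neq0 ?four_neq0.
- have t_def : t = ((1 - mu) / 2%:R) ^+ 2.
    rewrite (_ : t = (4%:R * t - (1 - mu) ^+ 2) / 4%:R + ((1 - mu) / 2%:R) ^+ 2).
      by rewrite t_root mul0r add0r.
    by field; rewrite two_neq0 four_neq0.
  by split=> //; rewrite c_def t_def; field; rewrite ?two_neq0 ?four_neq0.
Qed.

Lemma pchar_odd_natr2_neq0 (R : nzRingType) p :
  p \in [pchar R] -> odd p -> 2%:R != 0 :> R.
Proof.
move=> pchar_p odd_p; apply/negP => two0.
have : 2 \in [pchar R] by rewrite inE two0.
by rewrite (pcharf_eq pchar_p) inE => /eqP two_p; rewrite -two_p in odd_p.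
Qed.

Section Circles.
Variables (p q : nat) (F : finFieldType).
Hypotheses (pcharF : p \in [pchar F]) (p_nat_q : p.-nat q) (cardF : #|F| = (q ^ 2)%N).

Fact conj_is_nmod_morphism : nmod_morphism (conj q : F -> F).
Proof.
have pchar_q : [pchar F].-nat q by rewrite (eq_pnat _ (pcharf_eq pcharF)).
split=> [|x y]; last exact: exprDn_pchar.
by rewrite /conj expr0n eqn0Ngt (andP p_nat_q).1.
Qed.

Fact conj_is_monoid_morphism : monoid_morphism (conj q : F -> F).
Proof. by split=> [|x y]; rewrite /conj ?expr1n ?exprMn. Qed.

HB.instance Definition _ := GRing.isNmodMorphism.Build F F (conj q)
  conj_is_nmod_morphism.
HB.instance Definition _ := GRing.isMonoidMorphism.Build F F (conj q)
  conj_is_monoid_morphism.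

Lemma conjK : involutive (conj q : F -> F).
Proof. by move=> x; rewrite /conj -exprM mulnn -cardF expf_card. Qed.

Definition unit_circle : {set F} := [set P | Some P \in Bcirc q 1].

Lemma mem_unit_circle P : (P \in unit_circle) = (Some P \in Bcirc q 1).
Proof. by rewrite /unit_circle in_set. Qed.

Lemma card_unit_circle : #|unit_circle| = q.+1.
Proof.
rewrite -(@card_finField_unity_roots F q.+1); last first.
  by rewrite cardF -subn1 -[1%N](exp1n 2) subn_sqr addn1 dvdn_mull.
by apply: eq_card => P; rewrite !inE rmorph0 !subr0 /conj -exprS.
Qed.

Implicit Types (s c a z : F).

Lemma mem_circle1 s c z :
  (Some z \in circle1 q s c) = ((z - s) * (conj q z - conj q s) == c).
Proof. by rewrite inE. Qed.

Lemma mem_circle2 s c z :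
  (Some z \in circle2 q s c) = (conj q s * z + s * conj q z == c).
Proof. by rewrite inE. Qed.

Lemma mem_Bcirc a z : (Some z \in Bcirc q a) = (z * conj q z == a).
Proof. by rewrite mem_circle1 rmorph0 !subr0. Qed.

Lemma unit_circle_neq0 P : P \in unit_circle -> P != 0.
Proof.
rewrite mem_unit_circle mem_Bcirc; apply: contraTneq => ->.
by rewrite mul0r eq_sym oner_eq0.
Qed.

Lemma is_circle_circle1 s c : inGFq q c -> c != 0 -> is_circle q (circle1 q s c).
Proof.
move=> c_real c_neq0; apply/existsP; exists s; apply/existsP; exists c.
by rewrite c_real c_neq0 eqxx.
Qed.

Lemma mem_circle1_Bcirc s c a z :
  (Some z \in circle1 q s c :&: Bcirc q a) =
  (z * conj q z == a) && (conj q s * z + s * conj q z == a + s * conj q s - c).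
Proof.
rewrite inE mem_circle1 mem_Bcirc andbC.
have [<- /= | //] := eqVneq (z * conj q z) a.
apply/eqP/eqP => [<- | radical]; first by ring.
by rewrite (_ : c = z * conj q z + s * conj q s - (conj q s * z + s * conj q z));
  [ring | rewrite radical; ring].
Qed.

Section CharNot2.
Hypothesis two_neq0 : 2%:R != 0 :> F.

Let four_neq0 : 4%:R != 0 :> F.
Proof. by rewrite (natrM F 2 2) mulf_neq0. Qed.

Lemma oppr_eq_self (x : F) : (- x == x) = (x == 0).
Proof.
by rewrite eq_sym -addr_eq0 -mulr2n -mulr_natr mulf_eq0 (negbTE two_neq0) orbF.
Qed.

Lemma line_norm_tangent_point s k a z :
    k ^+ 2 = 4%:R * (s * conj q s) * a ->
    z * conj q z = a -> conj q s * z + s * conj q z = k ->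
  conj q s * z = k / 2%:R.
Proof.
move=> disc norm_z line_z.
have : (conj q s * z - k / 2%:R) ^+ 2 = 0.
  rewrite (_ : _ ^+ 2 = (conj q s * z) ^+ 2 - k * (conj q s * z) + k ^+ 2 / 4%:R).
    by rewrite disc -line_z -norm_z; field.
  by field; rewrite two_neq0 four_neq0.
by move/eqP; rewrite expf_eq0 /= subr_eq0 => /eqP.
Qed.

Lemma line_norm_tangent_disc s k a (X : {set option F}) :
    s != 0 -> #|X| = 1%N -> None \notin X ->
    (forall z, (Some z \in X) = (z * conj q z == a) && (conj q s * z + s * conj q z == k)) ->
  k ^+ 2 = 4%:R * (s * conj q s) * a.
Proof.
move=> s_neq0 /eqP/cards1P[[z|] X_def] None_notin memX; last first.
  by rewrite X_def set11 in None_notin.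
have cs_neq0 : conj q s != 0 by rewrite fmorph_eq0.
have /andP[/eqP norm_z /eqP line_z] : (z * conj q z == a) && (conj q s * z + s * conj q z == k).
  by rewrite -memX X_def set11.
(* The reflection z |-> s conj z / conj s preserves both the circle and the
   line, so it fixes their unique common point. *)
have : Some (s * conj q z / conj q s) \in X.
  rewrite memX !rmorphM fmorphV /= !conjK; apply/andP; split; apply/eqP.
  - by rewrite -norm_z; field; rewrite /= s_neq0 cs_neq0.
  - by rewrite -line_z; field; rewrite /= s_neq0 cs_neq0.
rewrite X_def inE => /eqP [] z_fixed.
have z_sym : s * conj q z = conj q s * z by rewrite -[in RHS]z_fixed; field.
rewrite (_ : 4%:R * _ * a = 4%:R * (conj q s * z) * (s * conj q z)); last first.
  by rewrite -norm_z; ring.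
by rewrite -line_z z_sym; ring.
Qed.

Lemma tangential_circle1_Bcirc s c a :
    s != 0 -> tangential (circle1 q s c) (Bcirc q a) ->
  (a + s * conj q s - c) ^+ 2 = 4%:R * (s * conj q s) * a.
Proof.
move=> s_neq0 /eqP card1.
by apply: line_norm_tangent_disc s_neq0 card1 _ _ => [|z]; rewrite ?mem_circle1_Bcirc ?inE.
Qed.

Lemma tangential_circle2_Bcirc s c a :
    s != 0 -> tangential (circle2 q s c) (Bcirc q a) ->
  c ^+ 2 = 4%:R * (s * conj q s) * a.
Proof.
move=> s_neq0 /eqP card1.
apply: line_norm_tangent_disc s_neq0 card1 _ _ => [|z]; first by rewrite !inE.
by rewrite inE mem_circle2 mem_Bcirc andbC.
Qed.

Lemma not_tangential_concentric c a :
  a != 0 -> ~~ tangential (circle1 q 0 c) (Bcirc q a).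
Proof.
move=> a_neq0; apply/negP => /cards1P[[z|] X_def]; last first.
  by have := set11 (@None F); rewrite -X_def !inE.
have z_in : Some z \in circle1 q 0 c :&: Bcirc q a by rewrite X_def set11.
have : Some (- z) \in circle1 q 0 c :&: Bcirc q a.
  by move: z_in; rewrite !mem_circle1_Bcirc rmorphN mulrNN rmorph0 !mul0r.
rewrite X_def inE => /eqP [] /eqP; rewrite oppr_eq_self => /eqP z0.
by move: z_in; rewrite mem_circle1_Bcirc z0 mul0r eq_sym (negbTE a_neq0).
Qed.

Lemma circle1_Bcirc_touch s c a z0 :
    s != 0 -> (a + s * conj q s - c) ^+ 2 = 4%:R * (s * conj q s) * a ->
    Some z0 \in circle1 q s c :&: Bcirc q a ->
  circle1 q s c :&: Bcirc q a = [set Some z0].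
Proof.
move=> s_neq0 disc z0_in; have cs_neq0 : conj q s != 0 by rewrite fmorph_eq0.
apply/setP => [[z|]]; last by rewrite !inE.
rewrite in_set1; apply/idP/eqP => [z_in | [->] //].
move: z_in z0_in; rewrite !mem_circle1_Bcirc => /andP[/eqP nz /eqP lz] /andP[/eqP nz0 /eqP lz0].
congr Some; apply: (mulfI cs_neq0).
by rewrite (line_norm_tangent_point disc nz lz) (line_norm_tangent_point disc nz0 lz0).
Qed.

Definition rotated_circles r c0 : {set {set option F}} :=
  [set circle1 q (r * P) c0 | P in unit_circle].

Lemma rotated_circle1_Bcirc_touch r e c0 a P :
    conj q r = r -> conj q e = e -> r != 0 -> e ^+ 2 = a -> (e - r) ^+ 2 = c0 ->
    P \in unit_circle ->
  circle1 q (r * P) c0 :&: Bcirc q a = [set Some (e * P)].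
Proof.
move=> r_real e_real r_neq0 <- <- P_in; have P_neq0 := unit_circle_neq0 P_in.
move: P_in; rewrite mem_unit_circle mem_Bcirc => /eqP norm_P.
have norm_rP : r * P * conj q (r * P) = r ^+ 2.
  by rewrite rmorphM /= r_real -[RHS]mulr1 -norm_P; ring.
apply: circle1_Bcirc_touch; first by rewrite mulf_neq0.
  by rewrite norm_rP; ring.
rewrite mem_circle1_Bcirc norm_rP !rmorphM /= e_real r_real.
by apply/andP; split; apply/eqP; rewrite -[RHS]mulr1 -norm_P; ring.
Qed.

Lemma circle1_in_rotated r c0 s :
  conj q r = r -> r != 0 -> s * conj q s = r ^+ 2 -> circle1 q s c0 \in rotated_circles r c0.
Proof.
move=> r_real r_neq0 norm_s; apply/imsetP; exists (s / r); last by rewrite mulrC divfK.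
rewrite mem_unit_circle mem_Bcirc fmorph_div /= r_real mulrACA -invfM -expr2 norm_s.
by rewrite divff ?expf_neq0.
Qed.

Lemma card_rotated_circles r c0 :
    (forall P, P \in unit_circle -> circle1 q (r * P) c0 :&: Bcirc q 1 = [set Some P]) ->
  #|rotated_circles r c0| = q.+1.
Proof.
move=> touch; rewrite card_in_imset ?card_unit_circle // => P Q P_in Q_in same.
by have := touch P P_in; rewrite same touch // => /set1_inj [].
Qed.

Lemma rotated_circlesE r c0 :
  [set E | [exists P, (Some P \in Bcirc q 1) && (E == circle1 q (r * P) c0)]] =
  rotated_circles r c0.
Proof.
apply/setP => E; rewrite in_set; apply/existsP/imsetP.
  by move=> [P /andP[P_in /eqP ->]]; exists P; rewrite ?mem_unit_circle.
by move=> [P P_in ->]; exists P; rewrite -mem_unit_circle P_in eqxx.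
Qed.

Section CommonTangents.
Variable mu : F.
Hypotheses (mu_real : inGFq q mu) (mu_neq0 : mu != 0) (mu2_neq1 : mu ^+ 2 != 1).
Local Notation s := ((1 + mu) / 2%:R).
Local Notation c := (((1 - mu) / 2%:R) ^+ 2).
Local Notation s' := ((1 - mu) / 2%:R).
Local Notation c' := (((1 + mu) / 2%:R) ^+ 2).

Let mu_conj : conj q mu = mu := eqP mu_real.

Let s_real : conj q s = s.
Proof. by rewrite fmorph_div rmorphD rmorph1 rmorph_nat /= mu_conj. Qed.

Let s'_real : conj q s' = s'.
Proof. by rewrite fmorph_div rmorphB rmorph1 rmorph_nat /= mu_conj. Qed.

Let s_neq0 : s != 0.
Proof.
rewrite mulf_neq0 ?invr_eq0 // addrC; apply: contra mu2_neq1.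
by rewrite addr_eq0 => /eqP ->; rewrite sqrrN expr1n.
Qed.

Let s'_neq0 : s' != 0.
Proof.
rewrite mulf_neq0 ?invr_eq0 // subr_eq0 eq_sym; apply: contra mu2_neq1.
by move=> /eqP ->; rewrite expr1n.
Qed.

Lemma touch_points P : P \in unit_circle ->
  [/\ circle1 q (s * P) c :&: Bcirc q 1 = [set Some P],
      circle1 q (s * P) c :&: Bcirc q (mu ^+ 2) = [set Some (mu * P)],
      circle1 q (s' * P) c' :&: Bcirc q 1 = [set Some P] &
      circle1 q (s' * P) c' :&: Bcirc q (mu ^+ 2) = [set Some (- mu * P)]].
Proof.
move=> P_in; have conj1 : conj q 1 = 1 :> F by rewrite rmorph1.
have conjNmu : conj q (- mu) = - mu by rewrite rmorphN /= mu_conj.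
split.
- have := rotated_circle1_Bcirc_touch s_real conj1 s_neq0 (expr1n _ _) _ P_in.
  by rewrite mul1r; apply; field.
- by apply: rotated_circle1_Bcirc_touch s_real mu_conj s_neq0 erefl _ P_in; field.
- have := rotated_circle1_Bcirc_touch s'_real conj1 s'_neq0 (expr1n _ _) _ P_in.
  by rewrite mul1r; apply; field.
- by apply: rotated_circle1_Bcirc_touch s'_real conjNmu s'_neq0 (sqrrN _) _ P_in; field.
Qed.

Let c_real : inGFq q c.
Proof. by apply/eqP; rewrite -/(conj q c) rmorphXn /= s'_real. Qed.

Let c'_real : inGFq q c'.
Proof. by apply/eqP; rewrite -/(conj q c') rmorphXn /= s_real. Qed.

Lemma rotated_sub_common_tangents :
  rotated_circles s c :|: rotated_circles s' c'
    \subset common_tangents q (Bcirc q 1) (Bcirc q (mu ^+ 2)).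
Proof.
apply/subsetP => E; rewrite in_setU inE /tangential.
by case/orP=> /imsetP[P /touch_points[t1 tb t1' tb'] ->];
  rewrite ?t1 ?tb ?t1' ?tb' !cards1 eqxx andbT is_circle_circle1 ?expf_neq0.
Qed.

Lemma common_tangents_sub_rotated :
  common_tangents q (Bcirc q 1) (Bcirc q (mu ^+ 2))
    \subset rotated_circles s c :|: rotated_circles s' c'.
Proof.
apply/subsetP => E; rewrite inE => /and3P[/existsP[s1 /existsP[c1]]].
case/orP=> [/and3P[_ _ /eqP ->] t1 tb | /and3P[s1_neq0 _ /eqP ->] t1 tb].
  have [s1_0 | s1_neq0] := eqVneq s1 0.
    by rewrite s1_0 (negbTE (not_tangential_concentric c1 (oner_neq0 F))) in t1.
  have := tangential_circle1_Bcirc s1_neq0 t1; rewrite mulr1 => disc1.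
  have discb := tangential_circle1_Bcirc s1_neq0 tb.
  have [[norm_s1 ->] | [norm_s1 ->]] := tangent_params two_neq0 mu2_neq1 disc1 discb.
    by rewrite in_setU circle1_in_rotated.
  by rewrite in_setU circle1_in_rotated ?orbT.
have nz : 4%:R * (s1 * conj q s1) != 0 by rewrite !mulf_neq0 ?fmorph_eq0.
have := tangential_circle2_Bcirc s1_neq0 tb.
rewrite (tangential_circle2_Bcirc s1_neq0 t1) => /(mulfI nz)/esym/eqP.
by rewrite (negbTE mu2_neq1).
Qed.

Lemma common_tangentsE :
  common_tangents q (Bcirc q 1) (Bcirc q (mu ^+ 2)) =
  rotated_circles s c :|: rotated_circles s' c'.
Proof.
by apply/eqP; rewrite eqEsubset common_tangents_sub_rotated rotated_sub_common_tangents.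
Qed.

Lemma rotated_circlesI : rotated_circles s c :&: rotated_circles s' c' = set0.
Proof.
apply/setP => E; rewrite in_setI in_set0.
apply/negP => /andP[/imsetP[P P_in ->] /imsetP[Q Q_in same]].
have [t1 tb _ _] := touch_points P_in; have [_ _ t1' tb'] := touch_points Q_in.
have PQ : P = Q by move: t1; rewrite same t1' => /set1_inj[].
move: tb; rewrite same tb' PQ => /set1_inj[] /eqP.
by rewrite mulNr oppr_eq_self mulf_eq0 (negbTE mu_neq0) (negbTE (unit_circle_neq0 Q_in)).
Qed.

Lemma card_common_tangents :
  #|common_tangents q (Bcirc q 1) (Bcirc q (mu ^+ 2))| = (2 * (q + 1))%N.
Proof.
rewrite common_tangentsE cardsU rotated_circlesI cards0 subn0.
rewrite !card_rotated_circles; first by rewrite addn1 mul2n addnn.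
all: by move=> P /touch_points[].
Qed.

Lemma mem_touching_circles P : P \in unit_circle ->
  [/\ Some P \in circle1 q (s * P) c, Some (mu * P) \in circle1 q (s * P) c,
      Some P \in circle1 q (s' * P) c' & Some (- mu * P) \in circle1 q (s' * P) c'].
Proof.
have mem_touch X Y (x : option F) : X :&: Y = [set x] -> x \in X.
  by move=> XY; have := set11 x; rewrite -XY => /setIP[].
by case/touch_points => /mem_touch ? /mem_touch ? /mem_touch ? /mem_touch ?.
Qed.

End CommonTangents.
End CharNot2.
End Circles.

Unset Implicit Arguments.

Theorem mainTheorem6 (p m q : nat) (F : finFieldType)
  (hp : prime p) (hpodd : odd p) (hm : (1 <= m)%N) (hq : q = (p ^ m)%N)
  (hchar : p \in [pchar F]) (hcard : #|F| = (q ^ 2)%N)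
  (mu : F) (hmu : inGFq q mu) (hmu0 : mu != 0) (hb : mu ^+ 2 != 1) :
  let b := mu ^+ 2 in
  let s := (1 + mu) / 2%:R in
  let c := ((1 - mu) / 2%:R) ^+ 2 in
  let s' := (1 - mu) / 2%:R in
  let c' := ((1 + mu) / 2%:R) ^+ 2 in
  let B1 := Bcirc q 1 in
  let Bb := Bcirc q b in
  #|common_tangents q B1 Bb| = (2 * (q + 1))%N /\
  common_tangents q B1 Bb =
    [set E | [exists P : F, (Some P \in B1) && (E == circle1 q (s * P) c)]] :|:
    [set E | [exists P : F, (Some P \in B1) && (E == circle1 q (s' * P) c')]] /\
  (forall P : F, Some P \in B1 ->
     [/\ Some P \in circle1 q (s * P) c, Some (mu * P) \in circle1 q (s * P) c,
         Some P \in circle1 q (s' * P) c' & Some (- mu * P) \in circle1 q (s' * P) c']).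
Proof.
have p_nat_q : p.-nat q by rewrite hq pnatX pnat_id.
have two_neq0 := pchar_odd_natr2_neq0 hchar hpodd.
cbv zeta; rewrite !rotated_circlesE.
split; first exact: (card_common_tangents hchar p_nat_q hcard two_neq0 hmu hmu0 hb).
split; first exact: (common_tangentsE hchar p_nat_q hcard two_neq0 hmu hb).
move=> P; rewrite -mem_unit_circle.
exact: (mem_touching_circles hchar p_nat_q two_neq0 hmu hb).
Qed.
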